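(* Let $M$ be a universal left-c.e. semi-measure and let $\mathcal S$ be the collection of all left-c.e. semi-measures. Then $\mathsf{MLR}_M=\bigcup_{\rho\in\mathcal S}\mathsf{MLR}_\rho$.
   Context: $2^{<\omega}$ is the set of finite binary strings, $\varepsilon$ the empty string, $[\![\sigma]\!]=\{X\in2^\omega:\sigma\preceq X\}$, $[\![S]\!]=\bigcup_{\sigma\in S}[\![\sigma]\!]$. A semi-measure is $\rho:2^{<\omega}\to[0,1]$ with $\rho(\varepsilon)=1$ and $\rho(\sigma)\ge\rho(\sigma0)+\rho(\sigma1)$; it is left-c.e. if its values are uniformly approximable from below by a computable, non-decreasing sequence of rationals. A left-c.e. semi-measure $M$ is universal if for every left-c.e. semi-measure $\rho$ there is $c\in\omega$ with $\rho(\sigma)\le c\cdot M(\sigma)$ for all $\sigma$. For $E\subseteq2^{<\omega}$, $\rho(E)=\sum_{\sigma\in E}\rho(\sigma)$. A $\rho$-Martin-Löf test is a uniformly c.e. sequence $(U_i)$ of subsets of $2^{<\omega}$ with $\rho(U_i)\le2^{-i}$; $X\in\mathsf{MLR}_\rho$ iff $X\notin\bigcap_i[\![U_i]\!]$ for every such test. *)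

From HB Require Import structures.
From mathcomp Require Import all_boot all_order all_algebra.
From mathcomp Require Import all_classical all_reals all_analysis.
Set Implicit Arguments. Unset Strict Implicit. Unset Printing Implicit Defensive.
Import Order.TTheory GRing.Theory Num.Theory.
Import numFieldNormedType.Exports.
Local Open Scope classical_set_scope.
Local Open Scope ring_scope.

Inductive prog : Type :=
| PZero : prog
| PSucc : prog
| PProj : nat -> prog
| PComp : prog -> seq prog -> prog
| PPrim : prog -> prog -> prog
| PMu   : prog -> prog.

Inductive peval : prog -> seq nat -> nat -> Prop :=
| ev_zero v : peval PZero v 0
| ev_succ x v : peval PSucc (x :: v) x.+1
| ev_proj i v : (i < size v)%N -> peval (PProj i) v (nth 0%N v i)
| ev_comp f gs v ws y :
    pevals gs v ws -> peval f ws y -> peval (PComp f gs) v y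
| ev_prim0 f g v y : peval f v y -> peval (PPrim f g) (0%N :: v) y
| ev_primS f g n v z y :
    peval (PPrim f g) (n :: v) z -> peval g (n :: z :: v) y ->
    peval (PPrim f g) (n.+1 :: v) y
| ev_mu f v n :
    peval f (n :: v) 0 ->
    (forall m, (m < n)%N -> exists k, peval f (m :: v) k.+1) ->
    peval (PMu f) v n
with pevals : seq prog -> seq nat -> seq nat -> Prop :=
| evs_nil v : pevals [::] v [::]
| evs_cons g gs v w ws :
    peval g v w -> pevals gs v ws -> pevals (g :: gs) v (w :: ws).

Definition computable2 (f : nat -> nat -> nat) : Prop :=
  exists p : prog, forall x y, peval p [:: x; y] (f x y).

(* bijective coding: [::] |-> 0, b :: s |-> 2 * code s + 1 + b *)
Fixpoint bcode (s : seq bool) : nat :=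
  match s with
  | [::] => 0%N
  | b :: s' => (bcode s').*2 + 1 + b
  end.

Definition prefix (sigma : seq bool) (X : nat -> bool) : Prop :=
  forall i, (i < size sigma)%N -> nth false sigma i = X i.

Section SemiMeasures.
Variable R : realType.

Definition semimeasure (rho : seq bool -> R) : Prop :=
  [/\ forall sigma, 0 <= rho sigma <= 1,
      rho [::] = 1 &
      forall sigma, rho (rcons sigma false) + rho (rcons sigma true) <= rho sigma].

Definition left_ce (rho : seq bool -> R) : Prop :=
  exists a b c : nat -> nat -> nat,
    [/\ computable2 a, computable2 b, computable2 c &
      forall sigma,
        let q := fun s : nat =>
          ((a (bcode sigma) s)%:R - (b (bcode sigma) s)%:R) /
          (c (bcode sigma) s).+1%:R : R in
        (forall s, q s <= q s.+1) /\ q @ \oo --> rho sigma].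

Definition left_ce_semimeasure (rho : seq bool -> R) : Prop :=
  semimeasure rho /\ left_ce rho.

Definition universal (M : seq bool -> R) : Prop :=
  left_ce_semimeasure M /\
  forall rho, left_ce_semimeasure rho ->
    exists c : nat, forall sigma, rho sigma <= c%:R * M sigma.

Definition unif_ce (U : nat -> set (seq bool)) : Prop :=
  exists p : prog, forall i sigma,
    U i sigma <-> exists y, peval p [:: i; bcode sigma] y.

Definition rho_of (rho : seq bool -> R) (E : set (seq bool)) : \bar R :=
  (\esum_(sigma in E) (rho sigma)%:E)%E.

Definition ML_test (rho : seq bool -> R) (U : nat -> set (seq bool)) : Prop :=
  unif_ce U /\ forall i, (rho_of rho (U i) <= ((2%:R : R) ^- i)%:E)%E.

Definition in_cyl (S : set (seq bool)) (X : nat -> bool) : Prop :=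
  exists2 sigma, S sigma & prefix sigma X.

Definition MLR (rho : seq bool -> R) : set (nat -> bool) :=
  [set X | forall U, ML_test rho U -> ~ (forall i, in_cyl (U i) X)].

End SemiMeasures.

From HB Require Import structures.
From mathcomp Require Import all_boot all_order all_algebra.
From mathcomp Require Import all_classical all_reals all_analysis.
Set Implicit Arguments. Unset Strict Implicit. Unset Printing Implicit Defensive.
Import Order.TTheory GRing.Theory Num.Theory.
Local Open Scope classical_set_scope.
Local Open Scope ring_scope.

(* If [rho <= c * M] then every [M]-test [U] yields the [rho]-test
   [i |-> U (i + c)], since [c * 2^-(i + c) <= 2^-i]; hence
   [MLR rho] is contained in [MLR M].  Universality of [M] gives such a [c]
   for every left-c.e. semi-measure, and [M] itself is one of them. *)

Fixpoint prog_addn (k : nat) : prog :=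
  if k is k'.+1 then PComp PSucc [:: prog_addn k'] else PProj 0.

Lemma peval_addn k i v : peval (prog_addn k) (i :: v) (i + k)%N.
Proof.
elim: k => [|k IHk] /=; first by rewrite addn0; exact: (@ev_proj 0 (i :: v)).
rewrite addnS; apply: (ev_comp (ws := [:: (i + k)%N])); last exact: ev_succ.
exact: evs_cons IHk (evs_nil _).
Qed.

Lemma peval_addn_inv k i v y : peval (prog_addn k) (i :: v) y -> y = (i + k)%N.
Proof.
elim: k y => [|k IHk] y /= H; first by inversion H; rewrite addn0.
inversion H as [| | |f gs v' ws y' Hws Hsucc| | |]; subst.
inversion Hws as [|g gs' v'' w ws' Hk _]; subst.
by inversion Hsucc; rewrite (IHk _ Hk) addnS.
Qed.

Lemma unif_ce_shift (U : nat -> set (seq bool)) k :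
  unif_ce U -> unif_ce (fun i => U (i + k)%N).
Proof.
move=> [p Up]; exists (PComp p [:: prog_addn k; PProj 1]) => i sigma.
rewrite Up; split=> -[y Hy]; exists y.
  apply: (ev_comp (ws := [:: (i + k)%N; bcode sigma])) => //.
  apply: evs_cons; first exact: peval_addn.
  by apply: evs_cons (evs_nil _); exact: (@ev_proj 1 [:: i; bcode sigma]).
inversion Hy as [| | |f gs v ws y' Hgs Hp| | |]; subst.
inversion Hgs as [|g gs' v' w ws' Hadd Hgs']; subst.
inversion Hgs' as [|g' gs'' v'' w' ws'' Hproj Hnil]; subst.
inversion Hnil; inversion Hproj; subst.
by rewrite -(peval_addn_inv Hadd).
Qed.

Lemma esumMn (R : realType) (T : choiceType) (I : set T) (a : T -> \bar R) n :
  (forall i, I i -> (0 <= a i)%E) ->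
  (\esum_(i in I) (a i *+ n) = (\esum_(i in I) a i) *+ n)%E.
Proof.
move=> a_ge0; elim: n => [|n IHn]; first exact: esum1.
rewrite muleS -IHn -esumD // => [|i Ii]; first by apply: eq_esum => i _; rewrite muleS.
by rewrite -mule_natl mule_ge0 ?lee_fin ?a_ge0.
Qed.

Lemma rho_of_le_natmul (R : realType) (rho M : seq bool -> R) c E :
  (forall sigma, 0 <= M sigma) -> (forall sigma, rho sigma <= c%:R * M sigma) ->
  (rho_of rho E <= (c%:R)%:E * rho_of M E)%E.
Proof.
move=> M_ge0 rho_le; rewrite mule_natl /rho_of -esumMn => [|sigma _]; last by rewrite lee_fin.
by apply: le_esum => sigma _; rewrite -EFin_natmul lee_fin -mulr_natl.
Qed.

Lemma mulrn_exp2V_le (R : realFieldType) i c : 2 ^- (i + c) *+ c <= 2 ^- i :> R.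
Proof.
have c_lt : (c%:R : R) < 2 ^+ c by rewrite -natrX ltr_nat ltn_expl.
rewrite -[_ *+ c]mulr_natr exprD invfM -mulrA ler_piMr ?invr_ge0 ?exprn_ge0 //.
by rewrite mulrC ler_pdivrMr ?exprn_gt0 // mul1r ltW.
Qed.

Lemma ML_test_shift (R : realType) (rho M : seq bool -> R) c U :
  (forall sigma, 0 <= M sigma) -> (forall sigma, rho sigma <= c%:R * M sigma) ->
  ML_test M U -> ML_test rho (fun i => U (i + c)%N).
Proof.
move=> M_ge0 rho_le [Uce UM]; split; first exact: unif_ce_shift.
move=> i; apply: le_trans (rho_of_le_natmul _ M_ge0 rho_le) _.
apply: le_trans (lee_wpmul2l _ (UM (i + c)%N)) _; first by rewrite lee_fin.
by rewrite -EFinM lee_fin mulr_natl mulrn_exp2V_le.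
Qed.

Lemma MLR_le_dominated (R : realType) (rho M : seq bool -> R) c :
  (forall sigma, 0 <= M sigma) -> (forall sigma, rho sigma <= c%:R * M sigma) ->
  MLR rho `<=` MLR M.
Proof.
move=> M_ge0 rho_le X Xrand U UM Ucov.
by apply: Xrand (ML_test_shift M_ge0 rho_le UM) _ => i; exact: Ucov.
Qed.

Theorem proposition5p2 (R : realType) (M : seq bool -> R) :
  universal M ->
  MLR M = \bigcup_(rho in [set rho : seq bool -> R | left_ce_semimeasure rho]) MLR rho.
Proof.
move=> [M_lce M_univ]; apply/seteqP; split => [X XM | X [rho rho_lce Xrho]].
  by exists M.
have [c rho_le] := M_univ rho rho_lce.
have M_ge0 sigma : 0 <= M sigma by have [[/(_ sigma)/andP[]]] := M_lce.
exact: MLR_le_dominated M_ge0 rho_le X Xrho.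
Qed.
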